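(* Let $D$ be a digraph with $\chi(D)>\omega$. Then the one-way infinite directed path $\vec P_\omega$ embeds into $D$. Moreover, if $T$ is any orientation of the rooted tree in which every vertex has countably infinitely many children, then $T$ embeds into $D$.
   Context: A digraph is a pair $D=(V,E)$ with $E\subseteq V^2$ such that $uv\in E$ implies $vu\notin E$. The dichromatic number $\chi(D)$ is the minimal number of acyclic vertex sets (sets inducing no directed cycle) needed to cover the vertex set of $D$. Embedding means as a not necessarily induced subdigraph. An orientation of an undirected graph assigns to each edge exactly one direction. *)

From Stdlib Require Import List.

Definition is_digraph {V : Type} (E : V -> V -> Prop) : Prop :=
  forall u v, E u v -> ~ E v u.

Definition has_dicycle_in {V : Type} (E : V -> V -> Prop) (A : V -> Prop) : Prop :=
  exists (n : nat) (c : nat -> V),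
    1 <= n /\
    (forall i, i < n -> A (c i)) /\
    (forall i j, i < n -> j < n -> c i = c j -> i = j) /\
    (forall i, S i < n -> E (c i) (c (S i))) /\
    E (c (n - 1)) (c 0).

Definition acyclic_set {V : Type} (E : V -> V -> Prop) (A : V -> Prop) : Prop :=
  ~ has_dicycle_in E A.

(* chi(D) <= omega: V is covered by countably many acyclic sets
   (finitely many can be padded with empty sets). *)
Definition dichromatic_le_omega {V : Type} (E : V -> V -> Prop) : Prop :=
  exists A : nat -> (V -> Prop),
    (forall n, acyclic_set E (A n)) /\ (forall v, exists n, A n v).

Definition dichromatic_gt_omega {V : Type} (E : V -> V -> Prop) : Prop :=
  ~ dichromatic_le_omega E.

Definition ray_embeds {V : Type} (E : V -> V -> Prop) : Prop :=
  exists f : nat -> V,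
    (forall i j, f i = f j -> i = j) /\ (forall i, E (f i) (f (S i))).

(* The rooted tree in which every vertex has countably infinitely many
   children: vertices are finite sequences of naturals (root = nil),
   the children of s are (n :: s) for n : nat.
   An orientation o assigns to each edge {s, n :: s} a direction:
   o s n = true means s -> n :: s, false means n :: s -> s. *)
Definition tree_orientation := list nat -> nat -> bool.

Definition tree_arc (o : tree_orientation) (x y : list nat) : Prop :=
  exists s n, (x = s /\ y = n :: s /\ o s n = true) \/
              (x = n :: s /\ y = s /\ o s n = false).

Definition embeds {W V : Type} (F : W -> W -> Prop) (E : V -> V -> Prop) : Prop :=
  exists f : W -> V,
    (forall x y, f x = f y -> x = y) /\ (forall x y, F x y -> E (f x) (f y)).

From Stdlib Require Import List Arith Lia Classical ClassicalEpsilon.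
From Stdlib Require Cantor.
From mathcomp Require classical_sets boolp.
Import ListNotations.

(* Call a vertex set Z rich if each of its vertices has infinitely many
   out-neighbours and infinitely many in-neighbours inside Z.  A nonempty rich
   set contains every orientation of the countably branching tree: embed the
   nodes greedily, parents before children, each new node being an unused
   neighbour, in the prescribed direction, of the image of its parent.

   To find a rich set, eliminate vertices one at a time, a vertex only when its
   out- or its in-neighbourhood among the surviving vertices is finite; a
   Zorn-maximal elimination leaves a rich set of survivors.  If nothing
   survives, every finite vertex set contains a vertex v whose neighbourhood
   inside the set (in the direction recorded for v) lies in a fixed finite list
   F v.  Greedy colouring then splits every finite set of vertices with
   |F v| = d into d+1 acyclic sets, compactness extends this to all such
   vertices, and ranging over d gives countably many acyclic sets covering D. *)

Definition incl_set {T : Type} (X Y : T -> Prop) : Prop := forall x, X x -> Y x.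

Definition chain {T : Type} (F : (T -> Prop) -> Prop) : Prop :=
  forall X Y, F X -> F Y -> incl_set X Y \/ incl_set Y X.

Definition bigunion {T : Type} (F : (T -> Prop) -> Prop) : T -> Prop :=
  fun x => exists X, F X /\ X x.

Lemma zorn_sets {T : Type} (P : (T -> Prop) -> Prop) :
  (forall F, (forall X, F X -> P X) -> chain F -> P (bigunion F)) ->
  exists M, P M /\ forall N, incl_set M N -> P N -> incl_set N M.
Proof.
  intros Hchain.
  destruct (@classical_sets.Zorn_bigcup T P) as [M [PM Mmax]].
  - intros F FP Ftot.
    replace (classical_sets.bigcup F (fun X => X)) with (bigunion F).
    + apply Hchain; [exact FP|].
      intros X Y FX FY; destruct (Ftot X Y FX FY); [left|right]; assumption.
    + apply boolp.funext; intro x; apply boolp.propext; split.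
      * intros [X [FX Xx]]; exists X; assumption.
      * intros [X FX Xx]; exists X; split; assumption.
  - exists M; split; [exact PM|].
    intros N MN PN x Nx; apply NNPP; intro nMx.
    apply (Mmax N); [split; [exact MN|]|exact PN].
    intro NM; exact (nMx (NM x Nx)).
Qed.

Definition finite_set {A : Type} (P : A -> Prop) : Prop :=
  exists L, forall x, P x -> In x L.

Lemma finite_set_sub {A : Type} (P Q : A -> Prop) :
  incl_set Q P -> finite_set P -> finite_set Q.
Proof. intros QP [L HL]; exists L; intros x Qx; exact (HL x (QP x Qx)). Qed.

Lemma finite_set_union {A : Type} (P Q : A -> Prop) :
  finite_set P -> finite_set Q -> finite_set (fun x => P x \/ Q x).
Proof.
  intros [L HL] [K HK]; exists (L ++ K).
  intros x [Px|Qx]; apply in_or_app; auto.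
Qed.

Lemma finite_set_eq {A : Type} (a : A) : finite_set (fun x => x = a).
Proof. exists [a]; intros x ->; left; reflexivity. Qed.

Lemma finite_common_witness {A : Type} (B P0 : A -> Prop)
    (Q : nat -> (A -> Prop) -> Prop) (n : nat) :
  (forall k P P', incl_set P P' -> Q k P -> Q k P') ->
  finite_set P0 -> incl_set P0 B ->
  (forall k, k < n -> exists P, finite_set P /\ incl_set P B /\ Q k P) ->
  exists P, finite_set P /\ incl_set P0 P /\ incl_set P B /\
    forall k, k < n -> Q k P.
Proof.
  intros Qmono HP0 P0B; induction n as [|n IH]; intros Hwit.
  - exists P0; split; [exact HP0|split; [intros x Hx; exact Hx|split; [exact P0B|]]].
    intros k Hk; lia.
  - destruct IH as [P1 [HP1 [P0P1 [P1B Q1]]]].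
    { intros k Hk; apply Hwit; lia. }
    destruct (Hwit n (Nat.lt_succ_diag_r n)) as [P2 [HP2 [P2B Q2]]].
    exists (fun x => P1 x \/ P2 x); split; [apply finite_set_union; assumption|].
    split; [intros x Hx; left; exact (P0P1 x Hx)|].
    split; [intros x [H|H]; auto|].
    intros k Hk; destruct (Nat.eq_dec k n) as [->|Hkn].
    + apply (Qmono n P2); [intros x Hx; right; exact Hx|exact Q2].
    + apply (Qmono k P1); [intros x Hx; left; exact Hx|apply Q1; lia].
Qed.

Definition dom {A B : Type} (X : A * B -> Prop) (a : A) : Prop := exists b, X (a, b).

Definition functional {A B : Type} (X : A * B -> Prop) : Prop :=
  forall a b1 b2, X (a, b1) -> X (a, b2) -> b1 = b2.

Definition add_pair {A B : Type} (X : A * B -> Prop) (a : A) (b : B) : A * B -> Prop :=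
  fun p => X p \/ p = (a, b).

Lemma functional_bigunion {A B : Type} (F : (A * B -> Prop) -> Prop) :
  (forall X, F X -> functional X) -> chain F -> functional (bigunion F).
Proof.
  intros Ffun Fch a b1 b2 [X1 [F1 H1]] [X2 [F2 H2]].
  destruct (Fch X1 X2 F1 F2) as [S|S].
  - exact (Ffun X2 F2 a b1 b2 (S _ H1) H2).
  - exact (Ffun X1 F1 a b1 b2 H1 (S _ H2)).
Qed.

Lemma functional_add_pair {A B : Type} (X : A * B -> Prop) a b :
  functional X -> ~ dom X a -> functional (add_pair X a b).
Proof.
  intros Xfun nXa a' b1 b2 [H1|H1] [H2|H2].
  - exact (Xfun a' b1 b2 H1 H2).
  - injection H2 as -> ->; exfalso; apply nXa; exists b1; exact H1.
  - injection H1 as -> ->; exfalso; apply nXa; exists b2; exact H2.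
  - injection H1 as -> ->; injection H2 as ->; reflexivity.
Qed.

Lemma maximal_add_pair {A B : Type} (P : (A * B -> Prop) -> Prop) M a b :
  (forall N, incl_set M N -> P N -> incl_set N M) -> ~ dom M a ->
  ~ P (add_pair M a b).
Proof.
  intros Mmax nMa PN; apply nMa; exists b.
  apply (Mmax _ (fun p Mp => or_introl Mp) PN); right; reflexivity.
Qed.

Lemma chain_dom_finite {A B : Type} (F : (A * B -> Prop) -> Prop) (P : A -> Prop) :
  chain F -> (exists Y, F Y) -> finite_set P -> incl_set P (dom (bigunion F)) ->
  exists Y, F Y /\ incl_set P (dom Y).
Proof.
  intros Fch [Y0 FY0] [L HL]; revert P HL.
  induction L as [|a L IH]; intros P HL HP.
  - exists Y0; split; [exact FY0|]; intros x Px; destruct (HL x Px).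
  - destruct (IH (fun x => P x /\ In x L)) as [Y1 [FY1 HY1]].
    { intros x [_ Lx]; exact Lx. }
    { intros x [Px _]; exact (HP x Px). }
    destruct (classic (P a)) as [Pa|nPa].
    + destruct (HP a Pa) as [b [Ya [FYa Yab]]].
      destruct (Fch Y1 Ya FY1 FYa) as [S|S].
      * exists Ya; split; [exact FYa|]; intros x Px.
        destruct (HL x Px) as [<-|Lx]; [exists b; exact Yab|].
        destruct (HY1 x (conj Px Lx)) as [b' Hb']; exists b'; exact (S _ Hb').
      * exists Y1; split; [exact FY1|]; intros x Px.
        destruct (HL x Px) as [<-|Lx]; [exists b; exact (S _ Yab)|].
        exact (HY1 x (conj Px Lx)).
    + exists Y1; split; [exact FY1|]; intros x Px.
      destruct (HL x Px) as [<-|Lx]; [contradiction|].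
      exact (HY1 x (conj Px Lx)).
Qed.

Section ColoringCompactness.
Variables (T : Type) (d : nat) (good : (T -> nat) -> (T -> Prop) -> Prop).
Hypothesis good_sub : forall q P P', incl_set P' P -> good q P -> good q P'.
Hypothesis good_ext : forall q q' P, (forall x, P x -> q x = q' x) -> good q P -> good q' P.
Hypothesis good_finitary :
  forall q P, (forall P', finite_set P' -> incl_set P' P -> good q P') -> good q P.
Variable W : T -> Prop.
Hypothesis good_finite : forall P, finite_set P -> incl_set P W ->
  exists q, (forall x, q x <= d) /\ good q P.

Definition agrees (q : T -> nat) (C : T * nat -> Prop) (P : T -> Prop) : Prop :=
  forall x k, P x -> C (x, k) -> q x = k.

Record extendable (C : T * nat -> Prop) : Prop := {
  extendable_functional : functional C;
  extendable_finite : forall P, finite_set P -> incl_set P W ->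
    exists q, (forall x, q x <= d) /\ agrees q C P /\ good q P }.

Lemma extendable_bigunion G :
  (forall C, G C -> extendable C) -> chain G -> extendable (bigunion G).
Proof.
  intros Gext Gch.
  assert (Ufun : functional (bigunion G)).
  { apply functional_bigunion; [|exact Gch].
    intros C GC; exact (extendable_functional _ (Gext C GC)). }
  split; [exact Ufun|]; intros P HP PW.
  destruct (classic (exists C, G C)) as [Gne|Gempty].
  - destruct (chain_dom_finite G (fun x => P x /\ dom (bigunion G) x) Gch Gne)
      as [Y [GY HY]].
    { apply (finite_set_sub P); [intros x [Px _]; exact Px|exact HP]. }
    { intros x [_ Ux]; exact Ux. }
    destruct (extendable_finite _ (Gext Y GY) P HP PW) as [q [qd [qY qgood]]].
    exists q; split; [exact qd|split; [|exact qgood]].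
    intros x k Px Uxk.
    destruct (HY x (conj Px (ex_intro _ k Uxk))) as [k' Yxk'].
    rewrite (qY x k' Px Yxk'); apply (Ufun x); [exists Y; split; assumption|exact Uxk].
  - destruct (good_finite P HP PW) as [q [qd qgood]].
    exists q; split; [exact qd|split; [|exact qgood]].
    intros x k _ [C [GC _]]; exfalso; apply Gempty; exists C; exact GC.
Qed.

Lemma maximal_extendable_total C :
  extendable C -> (forall C', incl_set C C' -> extendable C' -> incl_set C' C) ->
  incl_set W (dom C).
Proof.
  intros Cext Cmax v Wv; apply NNPP; intro nCv.
  set (obstruction k P := forall q, (forall x, q x <= d) ->
         agrees q (add_pair C v k) P -> ~ good q P).
  assert (Hobs : forall k, k < S d ->
            exists P, finite_set P /\ incl_set P W /\ obstruction k P).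
  { intros k _; apply NNPP; intro Hno.
    apply (maximal_add_pair extendable C v k Cmax nCv).
    split; [apply functional_add_pair; [exact (extendable_functional _ Cext)|exact nCv]|].
    intros P HP PW; apply NNPP; intro Hnq; apply Hno.
    exists P; split; [exact HP|split; [exact PW|]].
    intros q qd qC qgood; apply Hnq; exists q; auto. }
  destruct (finite_common_witness W (fun x => x = v) obstruction (S d))
    as [P [HP [vP [PW Pobs]]]].
  { intros k P P' PP' HobsP q qd qC qgood.
    apply (HobsP q qd); [intros x k' Px; apply qC, PP', Px|].
    exact (good_sub q P' P PP' qgood). }
  { apply finite_set_eq. }
  { intros x ->; exact Wv. }
  { exact Hobs. }
  destruct (extendable_finite _ Cext P HP PW) as [q [qd [qC qgood]]].
  apply (Pobs (q v) (le_n_S _ _ (qd v)) q qd); [|exact qgood].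
  intros x k Px [Cxk|Exk]; [exact (qC x k Px Cxk)|injection Exk as -> ->; reflexivity].
Qed.

Theorem coloring_compactness : exists c, good c W.
Proof.
  destruct (zorn_sets extendable extendable_bigunion) as [C [Cext Cmax]].
  pose proof (maximal_extendable_total C Cext Cmax) as Ctot.
  destruct (choice (fun v k => W v -> C (v, k))) as [c Hc].
  { intros v; destruct (classic (W v)) as [Wv|nWv].
    - destruct (Ctot v Wv) as [k Hk]; exists k; intros _; exact Hk.
    - exists 0; intros Wv; contradiction. }
  exists c; apply good_finitary; intros P HP PW.
  destruct (extendable_finite _ Cext P HP PW) as [q [_ [qC qgood]]].
  apply (good_ext q c P); [|exact qgood].
  intros x Px; exact (qC x (c x) Px (Hc x (PW x Px))).
Qed.

End ColoringCompactness.

Definition classic_eq_dec {A : Type} (x y : A) : {x = y} + {x <> y} :=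
  excluded_middle_informative (x = y).

Lemma exists_le_notin (l : list nat) (d : nat) :
  length l <= d -> exists k, k <= d /\ ~ In k l.
Proof.
  intros Hl; apply NNPP; intro Hall.
  assert (Hincl : incl (seq 0 (S d)) l).
  { intros k Hk; apply in_seq in Hk; apply NNPP; intro Hkl.
    apply Hall; exists k; split; [lia|exact Hkl]. }
  pose proof (NoDup_incl_length (seq_NoDup (S d) 0) Hincl) as Hlen.
  rewrite length_seq in Hlen; lia.
Qed.

Section Dicycles.
Context {V : Type} (E : V -> V -> Prop).

Definition arc_dir (b : bool) (u w : V) : Prop := if b then E u w else E w u.

Lemma arc_dir_irrefl b u : (forall v, ~ E v v) -> ~ arc_dir b u u.
Proof. intros Eirr; destruct b; apply Eirr. Qed.

Lemma dicycle_arc_dir n (c : nat -> V) b i :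
  (forall i, S i < n -> E (c i) (c (S i))) -> E (c (n - 1)) (c 0) -> i < n ->
  exists j, j < n /\ arc_dir b (c i) (c j).
Proof.
  intros Hsucc Hlast Hi; destruct b; simpl.
  - destruct (Nat.lt_ge_cases (S i) n) as [HSi|HSi].
    + exists (S i); split; [exact HSi|exact (Hsucc i HSi)].
    + exists 0; split; [lia|]; replace i with (n - 1) by lia; exact Hlast.
  - destruct i as [|i].
    + exists (n - 1); split; [lia|exact Hlast].
    + exists i; split; [lia|exact (Hsucc i Hi)].
Qed.

Lemma has_dicycle_in_mono (A B : V -> Prop) :
  incl_set A B -> has_dicycle_in E A -> has_dicycle_in E B.
Proof.
  intros AB [n [c [Hn [HA Hc]]]]; exists n, c.
  split; [exact Hn|split; [intros i Hi; exact (AB _ (HA i Hi))|exact Hc]].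
Qed.

Lemma has_dicycle_in_finite (A : V -> Prop) : has_dicycle_in E A ->
  exists A', finite_set A' /\ incl_set A' A /\ has_dicycle_in E A'.
Proof.
  intros [n [c [Hn [HA Hc]]]].
  exists (fun x => exists i, i < n /\ x = c i); split; [|split].
  - exists (map c (seq 0 n)); intros x [i [Hi ->]].
    apply in_map, in_seq; lia.
  - intros x [i [Hi ->]]; exact (HA i Hi).
  - exists n, c; split; [exact Hn|split; [intros i Hi; exists i; auto|exact Hc]].
Qed.

Definition acyclic_coloring (q : V -> nat) (P : V -> Prop) : Prop :=
  forall k, acyclic_set E (fun x => P x /\ q x = k).

Lemma acyclic_coloring_sub q P P' :
  incl_set P' P -> acyclic_coloring q P -> acyclic_coloring q P'.
Proof.
  intros P'P Hq k Hcyc; apply (Hq k).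
  revert Hcyc; apply has_dicycle_in_mono; intros x [Px qx]; split; auto.
Qed.

Lemma acyclic_coloring_ext q q' P :
  (forall x, P x -> q x = q' x) -> acyclic_coloring q P -> acyclic_coloring q' P.
Proof.
  intros qq' Hq k Hcyc; apply (Hq k).
  revert Hcyc; apply has_dicycle_in_mono; intros x [Px qx].
  split; [exact Px|rewrite qq'; assumption].
Qed.

Lemma acyclic_coloring_finitary q P :
  (forall P', finite_set P' -> incl_set P' P -> acyclic_coloring q P') ->
  acyclic_coloring q P.
Proof.
  intros Hfin k Hcyc.
  destruct (has_dicycle_in_finite _ Hcyc) as [A [HA [AP Acyc]]].
  apply (Hfin (fun x => A x) HA (fun x Ax => proj1 (AP x Ax)) k).
  revert Acyc; apply has_dicycle_in_mono; intros x Ax; split; [exact Ax|apply AP, Ax].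
Qed.

Lemma acyclic_coloring_empty q P : ~ (exists x, P x) -> acyclic_coloring q P.
Proof.
  intros Pempty k [n [c [Hn [HP _]]]].
  apply Pempty; exists (c 0); apply (HP 0 Hn).
Qed.

Definition recolor (q : V -> nat) (u : V) (k : nat) : V -> nat :=
  fun x => if classic_eq_dec x u then k else q x.

(* A monochromatic dicycle through [u] leaves [u] along a [b]-arc into [N],
   whose colours avoid [k]. *)
Lemma acyclic_coloring_recolor q P u b (N : list V) k :
  (forall v, ~ E v v) ->
  acyclic_coloring q (fun x => P x /\ x <> u) ->
  (forall w, P w -> arc_dir b u w -> In w N) -> ~ In k (map q N) ->
  acyclic_coloring (recolor q u k) P.
Proof.
  intros Eirr Hq HN Hk k' [n [c [Hn [Hin [Hinj [Hsucc Hlast]]]]]].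
  destruct (classic (exists i, i < n /\ c i = u)) as [[i [Hi Hci]]|Hno].
  - destruct (dicycle_arc_dir n c b i Hsucc Hlast Hi) as [j [Hj Hij]].
    rewrite Hci in Hij.
    destruct (Hin i Hi) as [_ Hki]; destruct (Hin j Hj) as [Pj Hkj].
    assert (Hju : c j <> u).
    { intros Heq; rewrite Heq in Hij; exact (arc_dir_irrefl b u Eirr Hij). }
    unfold recolor in Hki, Hkj; rewrite Hci in Hki.
    destruct (classic_eq_dec u u) as [_|]; [|congruence].
    destruct (classic_eq_dec (c j) u) as [|_]; [contradiction|].
    apply Hk; rewrite Hki, <- Hkj; apply in_map, HN; assumption.
  - apply (Hq k'); exists n, c.
    split; [exact Hn|split; [|split; [exact Hinj|split; assumption]]].
    intros i Hi; destruct (Hin i Hi) as [Pi Hki]; unfold recolor in Hki.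
    destruct (classic_eq_dec (c i) u) as [Hciu|Hciu].
    + exfalso; apply Hno; exists i; split; assumption.
    + split; [split|]; assumption.
Qed.

End Dicycles.

Lemma countable_acyclic_cover {V : Type} (E : V -> V -> Prop) (f : V -> nat) :
  (forall d, exists c, acyclic_coloring E c (fun x => f x = d)) ->
  dichromatic_le_omega E.
Proof.
  intros Hcol; destruct (choice _ Hcol) as [cols Hcols].
  exists (fun n v => Cantor.to_nat (f v, cols (f v) v) = n); split.
  - intros n; destruct (Cantor.of_nat n) as [d k] eqn:Hn.
    intros Hcyc; apply (Hcols d k); revert Hcyc; apply has_dicycle_in_mono.
    intros x Hx; rewrite <- Hx, Cantor.cancel_of_to in Hn.
    injection Hn as <- <-; split; reflexivity.
  - intros v; eexists; reflexivity.
Qed.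

Section DegenerateColoring.
Context {V : Type} (E : V -> V -> Prop).
Hypothesis E_irrefl : forall v, ~ E v v.
Variables (tau : V -> bool) (F : V -> list V).
Hypothesis degenerate : forall P, finite_set P -> (exists x, P x) ->
  exists u, P u /\ forall w, P w -> arc_dir E (tau u) u w -> In w (F u).

Lemma degenerate_finite_coloring d P :
  finite_set P -> incl_set P (fun x => length (F x) <= d) ->
  exists q, (forall x, q x <= d) /\ acyclic_coloring E q P.
Proof.
  intros [L HL]; revert P HL.
  induction L as [L IH] using (well_founded_induction (well_founded_ltof _ (@length V))).
  intros P HL Pd.
  destruct (classic (exists x, P x)) as [Pne|Pempty].
  2:{ exists (fun _ => 0); split; [lia|exact (acyclic_coloring_empty E _ P Pempty)]. }
  destruct (degenerate P (ex_intro _ L HL) Pne) as [u [Pu Hu]].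
  destruct (IH (remove classic_eq_dec u L)) with (P := fun x => P x /\ x <> u)
    as [q [qd qcol]].
  { exact (remove_length_lt classic_eq_dec L u (HL u Pu)). }
  { intros x [Px xu]; exact (in_in_remove classic_eq_dec L xu (HL x Px)). }
  { intros x [Px _]; exact (Pd x Px). }
  destruct (exists_le_notin (map q (F u)) d) as [k [kd Hk]].
  { rewrite length_map; exact (Pd u Pu). }
  exists (recolor q u k); split.
  - intros x; unfold recolor; destruct (classic_eq_dec x u); auto.
  - exact (acyclic_coloring_recolor E q P u (tau u) (F u) k E_irrefl qcol Hu Hk).
Qed.

Lemma degenerate_le_omega : dichromatic_le_omega E.
Proof.
  apply (countable_acyclic_cover E (fun x => length (F x))); intros d.
  apply (coloring_compactness V d (acyclic_coloring E)).
  - intros q P P'; apply acyclic_coloring_sub.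
  - apply acyclic_coloring_ext.
  - apply acyclic_coloring_finitary.
  - intros P HP PW; apply (degenerate_finite_coloring d P HP).
    intros x Px; rewrite (PW x Px); reflexivity.
Qed.

End DegenerateColoring.

Section Elimination.
Context {V : Type} (E : V -> V -> Prop).
Hypothesis E_irrefl : forall v, ~ E v v.

(* [M (v, (b, L))]: [v] has been eliminated because, among the vertices not
   yet eliminated, its [b]-neighbours all lie in the finite list [L]. *)
Record elimination (M : V * (bool * list V) -> Prop) : Prop := {
  elimination_functional : functional M;
  elimination_closed : forall u b L w, M (u, (b, L)) -> arc_dir E b u w ->
    In w L \/ dom M w;
  elimination_degenerate : forall P, finite_set P -> (exists x, P x) ->
    incl_set P (dom M) ->
    exists u b L, P u /\ M (u, (b, L)) /\ forall w, P w -> arc_dir E b u w -> In w L }.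

Definition rich (Z : V -> Prop) : Prop :=
  forall v, Z v -> forall b L, exists w, arc_dir E b v w /\ Z w /\ ~ In w L.

Lemma elimination_bigunion G :
  (forall M, G M -> elimination M) -> chain G -> elimination (bigunion G).
Proof.
  intros Gel Gch; split.
  - apply functional_bigunion; [|exact Gch].
    intros M GM; exact (elimination_functional _ (Gel M GM)).
  - intros u b L w [M [GM Mu]] Huw.
    destruct (elimination_closed _ (Gel M GM) u b L w Mu Huw) as [Lw|[d Mw]];
      [left; exact Lw|right; exists d, M; split; assumption].
  - intros P HP [x Px] PU.
    destruct (chain_dom_finite G P Gch) as [Y [GY PY]]; [|exact HP|exact PU|].
    { destruct (PU x Px) as [_ [Y [GY _]]]; exists Y; exact GY. }
    destruct (elimination_degenerate _ (Gel Y GY) P HP (ex_intro _ x Px) PY)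
      as [u [b [L [Pu [Yu Hu]]]]].
    exists u, b, L; split; [exact Pu|split; [exists Y; split; assumption|exact Hu]].
Qed.

Lemma elimination_add_pair M v b L :
  elimination M -> ~ dom M v ->
  (forall w, arc_dir E b v w -> In w L \/ dom M w) ->
  elimination (add_pair M v (b, L)).
Proof.
  intros Mel nMv Hv; split.
  - exact (functional_add_pair M v (b, L) (elimination_functional _ Mel) nMv).
  - intros u b' L' w [Mu|Eu] Huw.
    + destruct (elimination_closed _ Mel u b' L' w Mu Huw) as [Lw|[d Mw]];
        [left; exact Lw|right; exists d; left; exact Mw].
    + injection Eu as -> -> ->.
      destruct (Hv w Huw) as [Lw|[d Mw]]; [left; exact Lw|right; exists d; left; exact Mw].
  - intros P HP Pne PM.
    destruct (classic (exists x, P x /\ x <> v)) as [Hne|Honly].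
    + destruct (elimination_degenerate _ Mel (fun x => P x /\ x <> v))
        as [u [b' [L' [[Pu uv] [Mu Hu]]]]].
      { apply (finite_set_sub P); [intros x [Px _]; exact Px|exact HP]. }
      { exact Hne. }
      { intros x [Px xv]; destruct (PM x Px) as [d [Mx|Ex]];
          [exists d; exact Mx|injection Ex as ->; contradiction]. }
      exists u, b', L'; split; [exact Pu|split; [left; exact Mu|]].
      intros w Pw Huw; destruct (classic (w = v)) as [->|wv].
      * destruct (elimination_closed _ Mel u b' L' v Mu Huw) as [Lv|Mv];
          [exact Lv|contradiction].
      * exact (Hu w (conj Pw wv) Huw).
    + assert (Pv : P v).
      { destruct Pne as [x Px]; destruct (classic (x = v)) as [<-|xv];
          [exact Px|exfalso; apply Honly; exists x; split; assumption]. }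
      exists v, b, L; split; [exact Pv|split; [right; reflexivity|]].
      intros w Pw Hvw; destruct (classic (w = v)) as [->|wv].
      * exfalso; exact (arc_dir_irrefl E b v E_irrefl Hvw).
      * exfalso; apply Honly; exists w; split; assumption.
Qed.

Lemma maximal_elimination_rich :
  exists M, elimination M /\ rich (fun v => ~ dom M v).
Proof.
  destruct (zorn_sets elimination elimination_bigunion) as [M [Mel Mmax]].
  exists M; split; [exact Mel|]; intros v nMv b L.
  apply NNPP; intro Hno.
  apply (maximal_add_pair elimination M v (b, L) Mmax nMv).
  apply elimination_add_pair; [exact Mel|exact nMv|].
  intros w Hvw; destruct (classic (In w L)) as [Lw|nLw]; [left; exact Lw|right].
  apply NNPP; intro nMw; apply Hno; exists w; split; [exact Hvw|split; assumption].
Qed.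

Lemma total_elimination_le_omega M :
  elimination M -> (forall v, dom M v) -> dichromatic_le_omega E.
Proof.
  intros Mel Mtot.
  destruct (choice (fun v bL => M (v, bL)) Mtot) as [data Hdata].
  apply (degenerate_le_omega E E_irrefl (fun v => fst (data v)) (fun v => snd (data v))).
  intros P HP Pne.
  destruct (elimination_degenerate _ Mel P HP Pne (fun x _ => Mtot x))
    as [u [b [L [Pu [Mu Hu]]]]].
  exists u; split; [exact Pu|].
  rewrite (elimination_functional _ Mel u (data u) (b, L) (Hdata u) Mu); exact Hu.
Qed.

End Elimination.

(* A node's code exceeds its parent's, so nodes can be embedded in code order. *)
Fixpoint node_code (s : list nat) : nat :=
  match s with
  | [] => 0
  | n :: s' => S (Cantor.to_nat (n, node_code s'))
  end.

Fixpoint node_decode (fuel k : nat) : list nat :=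
  match fuel, k with
  | 0, _ | _, 0 => []
  | S f, S j => let (n, m) := Cantor.of_nat j in n :: node_decode f m
  end.

Definition node (k : nat) : list nat := node_decode (S k) k.

Lemma parent_code_lt j n m : Cantor.of_nat j = (n, m) -> m < S j.
Proof.
  intros Hj; pose proof (Cantor.cancel_to_of j) as Hc; rewrite Hj in Hc.
  pose proof (Cantor.to_nat_non_decreasing n m); lia.
Qed.

Lemma node_decode_code s fuel : node_code s < fuel -> node_decode fuel (node_code s) = s.
Proof.
  revert fuel; induction s as [|n s IH]; intros [|fuel] Hfuel; simpl in Hfuel; try lia;
    [reflexivity|].
  cbn [node_code node_decode]; rewrite Cantor.cancel_of_to; f_equal; apply IH.
  pose proof (Cantor.to_nat_non_decreasing n (node_code s)); lia.
Qed.

Lemma node_of_code s : node (node_code s) = s.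
Proof. apply node_decode_code; lia. Qed.

Lemma node_code_inj s t : node_code s = node_code t -> s = t.
Proof. intros Hst; rewrite <- (node_of_code s), <- (node_of_code t), Hst; reflexivity. Qed.

Section GreedyTreeEmbedding.
Context {V : Type} (E : V -> V -> Prop) (Z : V -> Prop) (v0 : V).
Variable next : V -> bool -> list V -> V.
Hypothesis next_spec : forall p b L, Z p ->
  Z (next p b L) /\ arc_dir E b p (next p b L) /\ ~ In (next p b L) L.
Hypothesis Zv0 : Z v0.
Variable o : tree_orientation.

(* Node [S j], where [Cantor.of_nat j = (n, m)], is the [n]-th child of node [m];
   [placed k] lists the images of the nodes [0, ..., k-1]. *)
Definition place (k : nat) (placed : list V) : V :=
  match k with
  | 0 => v0
  | S j => let (n, m) := Cantor.of_nat j in next (nth m placed v0) (o (node m) n) placed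
  end.

Fixpoint placed (k : nat) : list V :=
  match k with
  | 0 => []
  | S k' => placed k' ++ [place k' (placed k')]
  end.

Definition image (k : nat) : V := place k (placed k).

Lemma placed_length k : length (placed k) = k.
Proof. induction k as [|k IH]; simpl; [reflexivity|rewrite length_app, IH; simpl; lia]. Qed.

Lemma placed_nth k i : i < k -> nth i (placed k) v0 = image i.
Proof.
  induction k as [|k IH]; intros Hi; [lia|simpl].
  destruct (Nat.lt_ge_cases i k) as [Hik|Hik].
  - rewrite app_nth1 by (rewrite placed_length; exact Hik); exact (IH Hik).
  - replace i with k by lia.
    rewrite app_nth2, placed_length, Nat.sub_diag by (rewrite placed_length; lia).
    reflexivity.
Qed.

Lemma image_S j n m : Cantor.of_nat j = (n, m) ->
  image (S j) = next (image m) (o (node m) n) (placed (S j)).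
Proof.
  intros Hj; unfold image at 1, place; rewrite Hj.
  rewrite placed_nth by exact (parent_code_lt j n m Hj); reflexivity.
Qed.

Lemma image_fresh k : Z (image k) /\ ~ In (image k) (placed k).
Proof.
  induction k as [k IH] using (well_founded_induction lt_wf).
  destruct k as [|j]; [split; [exact Zv0|intros []]|].
  destruct (Cantor.of_nat j) as [n m] eqn:Hj.
  rewrite (image_S j n m Hj).
  destruct (next_spec (image m) (o (node m) n) (placed (S j))) as [Zk [_ Hk]];
    [exact (proj1 (IH m (parent_code_lt j n m Hj)))|].
  split; assumption.
Qed.

Lemma image_inj i k : image i = image k -> i = k.
Proof.
  intros Hik.
  assert (Hlt : forall i k, i < k -> image i <> image k).
  { intros i' k' Hlt Heq; apply (proj2 (image_fresh k')).
    rewrite <- Heq, <- (placed_nth k' i' Hlt).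
    apply nth_In; rewrite placed_length; exact Hlt. }
  destruct (Nat.lt_total i k) as [H|[H|H]];
    [exfalso; exact (Hlt i k H Hik)|exact H|exfalso; exact (Hlt k i H (eq_sym Hik))].
Qed.

Lemma image_child s n :
  arc_dir E (o s n) (image (node_code s)) (image (node_code (n :: s))).
Proof.
  change (node_code (n :: s)) with (S (Cantor.to_nat (n, node_code s))).
  rewrite (image_S _ n (node_code s) (Cantor.cancel_of_to _)).
  rewrite node_of_code.
  apply (next_spec _ _ _ (proj1 (image_fresh _))).
Qed.

Lemma greedy_tree_embeds : embeds (tree_arc o) E.
Proof.
  exists (fun s => image (node_code s)); split.
  - intros s t Hst; exact (node_code_inj s t (image_inj _ _ Hst)).
  - intros x y [s [n [[-> [-> Ho]]|[-> [-> Ho]]]]];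
      pose proof (image_child s n) as Harc; rewrite Ho in Harc; exact Harc.
Qed.

End GreedyTreeEmbedding.

Lemma rich_tree_embeds {V : Type} (E : V -> V -> Prop) (Z : V -> Prop) (v0 : V) :
  rich E Z -> Z v0 -> forall o, embeds (tree_arc o) E.
Proof.
  intros Zrich Zv0 o.
  apply (greedy_tree_embeds E Z v0
           (fun p b L => epsilon (inhabits v0)
                           (fun w => Z w /\ arc_dir E b p w /\ ~ In w L)));
    [|exact Zv0].
  intros p b L Zp; apply epsilon_spec.
  destruct (Zrich p Zp b L) as [w [Hpw [Zw Lw]]]; exists w; auto.
Qed.

Lemma ray_embeds_of_tree {V : Type} (E : V -> V -> Prop) :
  embeds (tree_arc (fun _ _ => true)) E -> ray_embeds E.
Proof.
  intros [f [finj farc]]; exists (fun i => f (repeat 0 i)); split.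
  - intros i j Hij; apply finj in Hij.
    rewrite <- (repeat_length 0 i), <- (repeat_length 0 j), Hij; reflexivity.
  - intros i; apply farc; exists (repeat 0 i), 0; left; auto.
Qed.

Theorem corollary3p2 (V : Type) (E : V -> V -> Prop) :
  is_digraph E -> dichromatic_gt_omega E ->
  ray_embeds E /\ (forall o : tree_orientation, embeds (tree_arc o) E).
Proof.
  intros Hdig Hgt.
  assert (E_irrefl : forall v, ~ E v v) by (intros v Hv; exact (Hdig v v Hv Hv)).
  destruct (maximal_elimination_rich E E_irrefl) as [M [Mel Mrich]].
  assert (Hsurvivor : exists v0, ~ dom M v0).
  { apply NNPP; intro Hnone; apply Hgt.
    apply (total_elimination_le_omega E E_irrefl M Mel).
    intros v; apply NNPP; intro nMv; apply Hnone; exists v; exact nMv. }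
  destruct Hsurvivor as [v0 nMv0].
  pose proof (rich_tree_embeds E _ v0 Mrich nMv0) as Htree.
  split; [apply ray_embeds_of_tree, Htree|exact Htree].
Qed.
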